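(* In the setup described in the context, assume the Levi-Civita connection $\nabla$ of $g$ is locally flat ($R=0$). Let $x\in T_pM$ induce a $Q$-basis, and let $\psi=\angle(x,Q^2x)$ be the $g$-angle, with $\psi\neq\pi/2$. Then $$\tilde r(x)=\tilde r(Qx)=\tilde r(Q^2x)=\tilde r(Q^3x)=\frac{1}{8\cos\psi}(3\tilde\tau^*+\tilde\tau)+\frac18(3\tilde\tau+\tilde\tau^* ).$$
   Context: Let $M$ be a 3-dimensional smooth manifold. Fix a coordinate chart $(x^1,x^2,x^3)$ with coordinate vector fields $\partial_i$. Structures: - $g$ is a Riemannian metric with $g(\partial_1,\partial_1)=g(\partial_2,\partial_2)=A$, $g(\partial_3,\partial_3)=B$ and $g(\partial_i,\partial_j)=0$ for $i\ne j$. Here $A,B$ are smooth positive functions. - $Q$ is the $(1,1)$-tensor field with $Q\partial_1=\partial_2$, $Q\partial_2=-\partial_1$, $Q\partial_3=\partial_3$. - $P=Q^2$ and $\tilde g(x,y)=g(x,Py)$. Curvature: - $\nabla$ and $\tilde\nabla$ are the Levi-Civita connections of $g$ and $\tilde g$, with curvatures $R$ and $\tilde R$ defined by $R(x,y)z=\nabla_x\nabla_yz-\nabla_y\nabla_xz-\nabla_{[x,y]}z$ (similarly for $\tilde R$). - $\tilde R(x,y,z,t)=\tilde g(\tilde R(x,y)z,t)$. - $\tilde\rho(y,z)=\tilde g^{ij}\tilde R(e_i,y,z,e_j)$, $\tilde\tau=\tilde g^{ij}\tilde\rho_{ij}$ and $\tilde\tau^*=g^{ij}\tilde\rho_{ij}$.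 - $\tilde r(x)=\tilde\rho(x,x)/\tilde g(x,x)$. Angles and $Q$-bases: - The $g$-angle is defined by $\cos\angle(u,v)=g(u,v)/\sqrt{g(u,u)g(v,v)}$. - A vector $x$ induces a $Q$-basis if $\{x,Qx,Q^2x\}$ is a basis of $T_pM$. *)

From Stdlib Require Import Reals List.
From Coquelicot Require Import Coquelicot.
Open Scope R_scope.

(** Points of the coordinate domain (a subset of R^3) and coordinates
    (indices 0,1,2 stand for x^1,x^2,x^3). *)
Definition pt := ((R * R) * R)%type.

Definition coord (p : pt) (i : nat) : R :=
  match i with
  | O => fst (fst p)
  | S O => snd (fst p)
  | _ => snd p
  end.

Definition upd (p : pt) (i : nat) (t : R) : pt :=
  match i with
  | O => ((t, snd (fst p)), snd p)
  | S O => ((fst (fst p), t), snd p)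
  | _ => ((fst (fst p), snd (fst p)), t)
  end.

Definition pd (i : nat) (f : pt -> R) (x : pt) : R :=
  Derive (fun t => f (upd x i t)) (coord x i).

Fixpoint pds (l : list nat) (f : pt -> R) : pt -> R :=
  match l with
  | nil => f
  | i :: l' => pd i (pds l' f)
  end.

Definition smooth_on (U : pt -> Prop) (f : pt -> R) : Prop :=
  forall l : list nat, (forall i, In i l -> (i < 3)%nat) ->
  forall x, U x ->
    continuous (pds l f) x /\
    (forall i, (i < 3)%nat -> ex_derive (fun t => pds l f (upd x i t)) (coord x i)).

Definition sum3 (f : nat -> R) : R := f 0%nat + f 1%nat + f 2%nat.

Definition idx3 (n : nat) : nat := Nat.modulo n 3.

Definition det3 (M : nat -> nat -> R) : R :=
  M 0%nat 0%nat * (M 1%nat 1%nat * M 2%nat 2%nat - M 1%nat 2%nat * M 2%nat 1%nat)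
  - M 0%nat 1%nat * (M 1%nat 0%nat * M 2%nat 2%nat - M 1%nat 2%nat * M 2%nat 0%nat)
  + M 0%nat 2%nat * (M 1%nat 0%nat * M 2%nat 1%nat - M 1%nat 1%nat * M 2%nat 0%nat).

(** (M^{-1})_{ij} = cofactor_{ji} / det M  (cyclic-index formula). *)
Definition inv3 (M : nat -> nat -> R) (i j : nat) : R :=
  (M (idx3 (j+1)) (idx3 (i+1)) * M (idx3 (j+2)) (idx3 (i+2))
   - M (idx3 (j+1)) (idx3 (i+2)) * M (idx3 (j+2)) (idx3 (i+1))) / det3 M.

(** A (pseudo-)Riemannian metric in coordinates: gm i j x = g(∂_i,∂_j) at x. *)
Definition metric := nat -> nat -> pt -> R.

Definition at_pt (gm : metric) (x : pt) : nat -> nat -> R := fun i j => gm i j x.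

(** Christoffel symbols of the Levi-Civita connection:
    ∇_{∂i} ∂j = Γ^k_{ij} ∂k. *)
Definition Gam (gm : metric) (k i j : nat) (x : pt) : R :=
  / 2 * sum3 (fun l => inv3 (at_pt gm x) k l *
                       (pd i (gm j l) x + pd j (gm i l) x - pd l (gm i j) x)).

(** Curvature R(∂i,∂j)∂k = Riem l i j k ∂l, with
    R(x,y)z = ∇x∇y z - ∇y∇x z - ∇[x,y] z. *)
Definition Riem (gm : metric) (l i j k : nat) (x : pt) : R :=
  pd i (Gam gm l j k) x - pd j (Gam gm l i k) x
  + sum3 (fun m => Gam gm m j k x * Gam gm l i m x - Gam gm m i k x * Gam gm l j m x).

(** R(∂i,∂j,∂k,∂l) = gm(R(∂i,∂j)∂k, ∂l). *)
Definition Riem4 (gm : metric) (i j k l : nat) (x : pt) : R :=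
  sum3 (fun m => Riem gm m i j k x * gm m l x).

Definition Ric (gm : metric) (a b : nat) (x : pt) : R :=
  sum3 (fun i => sum3 (fun j => inv3 (at_pt gm x) i j * Riem4 gm i a b j x)).

Definition trace_wrt (h : metric) (T : nat -> nat -> pt -> R) (x : pt) : R :=
  sum3 (fun i => sum3 (fun j => inv3 (at_pt h x) i j * T i j x)).

Definition vec := nat -> R.

Definition bil (M : nat -> nat -> R) (u v : vec) : R :=
  sum3 (fun i => sum3 (fun j => M i j * u i * v j)).

Definition gmet (A B : pt -> R) : metric :=
  fun i j x => if Nat.eqb i j then (if Nat.eqb i 2 then B x else A x) else 0.

(** Matrix of Q: Qm i j = i-th component of Q ∂_j.
    Q∂1 = ∂2, Q∂2 = -∂1, Q∂3 = ∂3. *)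
Definition Qm (i j : nat) : R :=
  match i, j with
  | 1%nat, 0%nat => 1
  | 0%nat, 1%nat => -1
  | 2%nat, 2%nat => 1
  | _, _ => 0
  end.

Definition Qv (v : vec) : vec := fun i => sum3 (fun j => Qm i j * v j).

Definition Pm (i j : nat) : R := sum3 (fun k => Qm i k * Qm k j).

(** tilde g(x,y) = g(x, P y): components g(∂i, P ∂j). *)
Definition gtil (A B : pt -> R) : metric :=
  fun i j x => sum3 (fun k => gmet A B i k x * Pm k j).

Definition rho_til (A B : pt -> R) := Ric (gtil A B).
Definition tau_til (A B : pt -> R) (x : pt) : R := trace_wrt (gtil A B) (rho_til A B) x.
Definition tau_til_star (A B : pt -> R) (x : pt) : R := trace_wrt (gmet A B) (rho_til A B) x.

Definition r_til (A B : pt -> R) (p : pt) (v : vec) : R :=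
  bil (at_pt (rho_til A B) p) v v / bil (at_pt (gtil A B) p) v v.

Definition gangle (A B : pt -> R) (p : pt) (u v : vec) : R :=
  acos (bil (at_pt (gmet A B) p) u v /
        sqrt (bil (at_pt (gmet A B) p) u u * bil (at_pt (gmet A B) p) v v)).

(** {u,v,w} is a basis of T_pM (three linearly independent vectors in a
    3-dimensional space). *)
Definition is_basis3 (u v w : vec) : Prop :=
  forall a b c : R,
    (forall i, (i < 3)%nat -> a * u i + b * v i + c * w i = 0) ->
    a = 0 /\ b = 0 /\ c = 0.

Definition induces_Q_basis (v : vec) : Prop := is_basis3 v (Qv v) (Qv (Qv v)).

From Stdlib Require Import Reals List Lra Lia Psatz FunctionalExtensionality.
From Coquelicot Require Import Coquelicot.
Open Scope R_scope.

(** Both [g = diag(A,A,B)] and [g~ = diag(-A,-A,B)] are diagonal in the chart, so their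
    Christoffel symbols and curvatures are explicit rational expressions in [A], [B] and their
    first and second partial derivatives. Comparing them, every off-diagonal component of the
    Ricci tensor [rho~] of [g~], and the difference [rho~(∂2,∂2) - rho~(∂1,∂1)], is a linear
    combination of components of [R]. Hence [R = 0] forces [rho~ = diag(al, al, be)] at [p].
    Now [g], [g~] and [rho~] all have the shape [diag(a,a,b)], which is invariant under the
    rotation [Q]; this gives the first three equalities. Finally
    [cos psi = g(x,Px)/g(x,x) = g~(x,x)/g(x,x)], [tau~ = -2 al/A + be/B] and
    [tau~* = 2 al/A + be/B], and the closed form for [r~(x)] is an algebraic identity. *)

Definition diag_metric (D : nat -> pt -> R) : metric :=
  fun i j => if Nat.eqb i j then D i else fun _ => 0.

Definition kron (a b : nat) : R := if Nat.eqb a b then 1 else 0.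

Definition Gam_diag (D : nat -> pt -> R) (k i j : nat) (y : pt) : R :=
  (kron k j * pd i (D j) y + kron k i * pd j (D i) y - kron i j * pd k (D i) y)
  / (2 * D k y).

Definition dGam_diag (D : nat -> pt -> R) (i l j k : nat) (y : pt) : R :=
  ((kron l k * pd i (pd j (D k)) y + kron l j * pd i (pd k (D j)) y
    - kron j k * pd i (pd l (D j)) y) * D l y
   - (kron l k * pd j (D k) y + kron l j * pd k (D j) y - kron j k * pd l (D j) y)
     * pd i (D l) y) / (2 * D l y ^ 2).

Definition Riem_diag (D : nat -> pt -> R) (l i j k : nat) (y : pt) : R :=
  dGam_diag D i l j k y - dGam_diag D j l i k y
  + sum3 (fun m => Gam_diag D m j k y * Gam_diag D l i m y
                   - Gam_diag D m i k y * Gam_diag D l j m y).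

Lemma pd_zero (i : nat) (y : pt) : pd i (fun _ => 0) y = 0.
Proof. unfold pd. apply Derive_const. Qed.

Lemma Gam_diag_metric (D : nat -> pt -> R) (y : pt) :
  (forall k, (k < 3)%nat -> D k y <> 0) ->
  forall k i j, (k < 3)%nat -> (i < 3)%nat -> (j < 3)%nat ->
  Gam (diag_metric D) k i j y = Gam_diag D k i j y.
Proof.
  intros HD k i j Hk Hi Hj.
  pose proof (HD 0%nat ltac:(lia)); pose proof (HD 1%nat ltac:(lia)); pose proof (HD 2%nat ltac:(lia)).
  destruct k as [|[|[|k]]]; try lia; destruct i as [|[|[|i]]]; try lia;
  destruct j as [|[|[|j]]]; try lia;
  unfold Gam, Gam_diag, sum3, inv3, det3, at_pt, diag_metric, idx3, kron; simpl;
  rewrite ?pd_zero; field; auto.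
Qed.

Lemma Ric_diag_metric (D : nat -> pt -> R) (y : pt) :
  (forall k, (k < 3)%nat -> D k y <> 0) ->
  forall a b, Ric (diag_metric D) a b y = sum3 (fun i => Riem (diag_metric D) i i a b y).
Proof.
  intros HD a b.
  pose proof (HD 0%nat ltac:(lia)); pose proof (HD 1%nat ltac:(lia)); pose proof (HD 2%nat ltac:(lia)).
  unfold Ric, Riem4, sum3, inv3, det3, at_pt, diag_metric, idx3; simpl.
  field; auto.
Qed.

Lemma Derive_lincomb3_div (F1 F2 F3 G : R -> R) (c1 c2 c3 x : R) :
  ex_derive F1 x -> ex_derive F2 x -> ex_derive F3 x -> ex_derive G x -> G x <> 0 ->
  Derive (fun t => (c1 * F1 t + c2 * F2 t - c3 * F3 t) / (2 * G t)) x =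
  ((c1 * Derive F1 x + c2 * Derive F2 x - c3 * Derive F3 x) * G x
   - (c1 * F1 x + c2 * F2 x - c3 * F3 x) * Derive G x) / (2 * G x ^ 2).
Proof.
  intros H1 H2 H3 HG HG0.
  apply is_derive_unique. auto_derive.
  - repeat split; auto.
  - change (fun t => F1 t) with F1; change (fun t => F2 t) with F2;
    change (fun t => F3 t) with F3; change (fun t => G t) with G.
    field. exact HG0.
Qed.

Lemma upd_coord (p : pt) (i : nat) : upd p i (coord p i) = p.
Proof. destruct p as [[a b] c]; destruct i as [|[|i]]; reflexivity. Qed.

Lemma open_coord_line (U : pt -> Prop) (p : pt) :
  open U -> U p -> forall i, locally (coord p i) (fun t => U (upd p i t)).
Proof.
  intros HU Hp i. destruct (HU p Hp) as [e He]. exists e. intros t Ht.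
  apply He. destruct p as [[a b] c].
  destruct i as [|[|i]]; simpl in *; repeat split; try apply ball_center; exact Ht.
Qed.

Lemma pd_opp (i : nat) (f : pt -> R) : pd i (fun y => - f y) = fun y => - pd i f y.
Proof. extensionality y. unfold pd. apply Derive_opp. Qed.

Lemma pds_opp (l : list nat) (f : pt -> R) : pds l (fun y => - f y) = fun y => - pds l f y.
Proof. induction l as [|i l IH]; simpl; [reflexivity | rewrite IH; apply pd_opp]. Qed.

Lemma smooth_on_opp (U : pt -> Prop) (f : pt -> R) :
  smooth_on U f -> smooth_on U (fun y => - f y).
Proof.
  intros Hf l Hl x Hx. rewrite pds_opp.
  destruct (Hf l Hl x Hx) as [Hc Hd]. split.
  - exact (continuous_opp (V := R_NormedModule) _ _ Hc).
  - intros i Hi. exact (ex_derive_opp (V := R_NormedModule) _ _ (Hd i Hi)).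
Qed.

Section SmoothDiagonalMetric.

Variables (U : pt -> Prop) (D : nat -> pt -> R) (p : pt).
Hypothesis U_open : open U.
Hypothesis D_smooth : forall k, (k < 3)%nat -> smooth_on U (D k).
Hypothesis D_nonzero : forall k, (k < 3)%nat -> forall y, U y -> D k y <> 0.
Hypothesis p_in_U : U p.

Lemma D_coord_derivable (k i : nat) : (k < 3)%nat -> (i < 3)%nat ->
  ex_derive (fun t => D k (upd p i t)) (coord p i).
Proof.
  intros Hk Hi.
  exact (proj2 (D_smooth k Hk nil (fun i H => match H with end) p p_in_U) i Hi).
Qed.

Lemma pd_D_coord_derivable (a k i : nat) : (a < 3)%nat -> (k < 3)%nat -> (i < 3)%nat ->
  ex_derive (fun t => pd a (D k) (upd p i t)) (coord p i).
Proof.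
  intros Ha Hk Hi.
  refine (proj2 (D_smooth k Hk (a :: nil) _ p p_in_U) i Hi).
  intros b [<-|[]]; exact Ha.
Qed.

Lemma pd_Gam_diag_metric (i l j k : nat) :
  (i < 3)%nat -> (l < 3)%nat -> (j < 3)%nat -> (k < 3)%nat ->
  pd i (Gam (diag_metric D) l j k) p = dGam_diag D i l j k p.
Proof.
  intros Hi Hl Hj Hk. unfold pd at 1.
  rewrite (Derive_ext_loc _ (fun t => Gam_diag D l j k (upd p i t))).
  2:{ apply (filter_imp (fun t => U (upd p i t))); [|exact (open_coord_line U p U_open p_in_U i)].
      intros t Ht. apply Gam_diag_metric; auto. }
  unfold Gam_diag.
  rewrite (Derive_lincomb3_div (fun t => pd j (D k) (upd p i t)) (fun t => pd k (D j) (upd p i t))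
             (fun t => pd l (D j) (upd p i t)) (fun t => D l (upd p i t)));
    rewrite ?upd_coord; auto using D_coord_derivable, pd_D_coord_derivable.
Qed.

Lemma Riem_diag_metric (l i j k : nat) :
  (l < 3)%nat -> (i < 3)%nat -> (j < 3)%nat -> (k < 3)%nat ->
  Riem (diag_metric D) l i j k p = Riem_diag D l i j k p.
Proof.
  intros Hl Hi Hj Hk.
  assert (Dp : forall m, (m < 3)%nat -> D m p <> 0) by (intros m Hm; auto).
  unfold Riem, Riem_diag, sum3.
  rewrite !pd_Gam_diag_metric, !(Gam_diag_metric D p Dp) by lia.
  reflexivity.
Qed.

End SmoothDiagonalMetric.

Definition gmet_diag (A B : pt -> R) (k : nat) : pt -> R := if Nat.eqb k 2 then B else A.

Definition gtil_diag (A B : pt -> R) (k : nat) : pt -> R :=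
  match k with
  | 0%nat | 1%nat => fun y => - A y
  | 2%nat => B
  | _ => fun _ => 0
  end.

Lemma gmet_diag_metric (A B : pt -> R) : gmet A B = diag_metric (gmet_diag A B).
Proof.
  extensionality i; extensionality j; extensionality y.
  unfold gmet, diag_metric, gmet_diag.
  destruct (Nat.eqb i j) eqn:E; [|reflexivity].
  apply Nat.eqb_eq in E; subst. destruct (Nat.eqb j 2); reflexivity.
Qed.

Lemma gtil_diag_metric (A B : pt -> R) : gtil A B = diag_metric (gtil_diag A B).
Proof.
  extensionality i; extensionality j; extensionality y.
  unfold gtil, Pm, diag_metric, gtil_diag, Qm, gmet, sum3.
  destruct i as [|[|[|i]]]; destruct j as [|[|[|j]]]; simpl; try ring;
  destruct (Nat.eqb i j); ring.
Qed.

Definition diag_aab (a b : R) (i j : nat) : R :=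
  if Nat.eqb i j then (if Nat.eqb i 2 then b else a) else 0.

Definition agree3 (M N : nat -> nat -> R) : Prop :=
  forall i j, (i < 3)%nat -> (j < 3)%nat -> M i j = N i j.

Section RicciOfGtil.

Variables (U : pt -> Prop) (A B : pt -> R) (p : pt).
Hypothesis U_open : open U.
Hypothesis A_smooth : smooth_on U A.
Hypothesis B_smooth : smooth_on U B.
Hypothesis A_pos : forall y, U y -> 0 < A y.
Hypothesis B_pos : forall y, U y -> 0 < B y.
Hypothesis p_in_U : U p.

Lemma Riem_gmet (l i j k : nat) :
  (l < 3)%nat -> (i < 3)%nat -> (j < 3)%nat -> (k < 3)%nat ->
  Riem (gmet A B) l i j k p = Riem_diag (gmet_diag A B) l i j k p.
Proof.
  intros Hl Hi Hj Hk. rewrite gmet_diag_metric. apply (Riem_diag_metric U); auto.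
  - intros [|[|[|m]]] Hm; simpl; auto; lia.
  - intros [|[|[|m]]] Hm y Hy; simpl; try lia; apply not_eq_sym, Rlt_not_eq; auto.
Qed.

Lemma Ric_gtil (a b : nat) : (a < 3)%nat -> (b < 3)%nat ->
  Ric (gtil A B) a b p = sum3 (fun i => Riem_diag (gtil_diag A B) i i a b p).
Proof.
  intros Ha Hb.
  assert (smooth : forall k, (k < 3)%nat -> smooth_on U (gtil_diag A B k))
    by (intros [|[|[|m]]] Hm; simpl; auto using smooth_on_opp; lia).
  assert (nonzero : forall k, (k < 3)%nat -> forall y, U y -> gtil_diag A B k y <> 0).
  { intros [|[|[|m]]] Hm y Hy; simpl; try lia;
      [apply Ropp_neq_0_compat..|]; apply not_eq_sym, Rlt_not_eq; auto. }
  rewrite gtil_diag_metric, Ric_diag_metric by auto.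
  unfold sum3. rewrite !(Riem_diag_metric U) by (auto; lia). reflexivity.
Qed.

Ltac expand_curvature :=
  unfold sum3; rewrite ?Ric_gtil, ?Riem_gmet by lia;
  unfold Riem_diag, dGam_diag, Gam_diag, sum3, kron;
  cbn [gmet_diag gtil_diag Nat.eqb]; rewrite ?pd_opp; cbv beta;
  pose proof (A_pos p p_in_U); pose proof (B_pos p p_in_U);
  field; lra.

Lemma Ric_gtil_01 : Ric (gtil A B) 0 1 p =
  - Riem (gmet A B) 0 0 1 0 p + A p / B p * Riem (gmet A B) 1 0 2 2 p.
Proof. expand_curvature. Qed.

Lemma Ric_gtil_10 : Ric (gtil A B) 1 0 p =
  Riem (gmet A B) 0 0 1 0 p + A p / B p * Riem (gmet A B) 0 1 2 2 p.
Proof. expand_curvature. Qed.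

Lemma Ric_gtil_02 : Ric (gtil A B) 0 2 p =
  - Riem (gmet A B) 0 0 2 0 p - Riem (gmet A B) 0 1 2 1 p - Riem (gmet A B) 2 0 2 2 p.
Proof. expand_curvature. Qed.

Lemma Ric_gtil_20 : Ric (gtil A B) 2 0 p =
  Riem (gmet A B) 0 0 2 0 p - Riem (gmet A B) 0 1 2 1 p.
Proof. expand_curvature. Qed.

Lemma Ric_gtil_12 : Ric (gtil A B) 1 2 p =
  Riem (gmet A B) 0 0 1 2 p - Riem (gmet A B) 2 1 2 2 p.
Proof. expand_curvature. Qed.

Lemma Ric_gtil_21 : Ric (gtil A B) 2 1 p =
  - Riem (gmet A B) 0 0 1 2 p + 2 * Riem (gmet A B) 0 0 2 1 p.
Proof. expand_curvature. Qed.

Lemma Ric_gtil_11 : Ric (gtil A B) 1 1 p =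
  Ric (gtil A B) 0 0 p + A p / B p * (Riem (gmet A B) 1 1 2 2 p - Riem (gmet A B) 0 0 2 2 p).
Proof. expand_curvature. Qed.

Lemma Ric_gtil_of_flat_gmet :
  (forall l i j k, (l < 3)%nat -> (i < 3)%nat -> (j < 3)%nat -> (k < 3)%nat ->
     Riem (gmet A B) l i j k p = 0) ->
  agree3 (at_pt (rho_til A B) p) (diag_aab (Ric (gtil A B) 0 0 p) (Ric (gtil A B) 2 2 p)).
Proof.
  intros flat i j Hi Hj.
  pose proof Ric_gtil_01 as E01; pose proof Ric_gtil_10 as E10;
  pose proof Ric_gtil_02 as E02; pose proof Ric_gtil_20 as E20;
  pose proof Ric_gtil_12 as E12; pose proof Ric_gtil_21 as E21;
  pose proof Ric_gtil_11 as E11.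
  repeat match goal with
  | H : context [Riem (gmet A B) ?l ?i ?j ?k p] |- _ => rewrite (flat l i j k) in H by lia
  end.
  unfold at_pt, rho_til, diag_aab.
  destruct i as [|[|[|i]]]; destruct j as [|[|[|j]]]; simpl; try lia;
    rewrite ?E01, ?E02, ?E10, ?E11, ?E12, ?E20, ?E21; ring.
Qed.

End RicciOfGtil.

Definition qform (a b : R) (u v : vec) : R :=
  a * (u 0%nat * v 0%nat + u 1%nat * v 1%nat) + b * (u 2%nat * v 2%nat).

Lemma bil_diag_aab (M : nat -> nat -> R) (a b : R) (u v : vec) :
  agree3 M (diag_aab a b) -> bil M u v = qform a b u v.
Proof.
  intros HM. unfold bil, sum3. rewrite !HM by lia.
  unfold diag_aab, qform; simpl. ring.
Qed.

Lemma trace_wrt_diag_aab (h T : metric) (x : pt) (a b c d : R) :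
  agree3 (at_pt h x) (diag_aab a b) -> agree3 (at_pt T x) (diag_aab c d) ->
  a <> 0 -> b <> 0 -> trace_wrt h T x = 2 * c / a + d / b.
Proof.
  intros Hh HT Ha Hb. unfold agree3, at_pt in Hh, HT.
  unfold trace_wrt, sum3, inv3, det3, at_pt, idx3; simpl.
  rewrite !Hh, !HT by lia. unfold diag_aab; simpl. field. auto.
Qed.

Lemma gmet_diag_aab (A B : pt -> R) (p : pt) :
  agree3 (at_pt (gmet A B) p) (diag_aab (A p) (B p)).
Proof. intros i j _ _. reflexivity. Qed.

Lemma gtil_diag_aab (A B : pt -> R) (p : pt) :
  agree3 (at_pt (gtil A B) p) (diag_aab (- A p) (B p)).
Proof.
  intros i j Hi Hj. unfold at_pt. rewrite gtil_diag_metric.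
  destruct i as [|[|[|i]]]; destruct j as [|[|[|j]]]; reflexivity || lia.
Qed.

Lemma qform_Qv (a b : R) (u v : vec) : qform a b (Qv u) (Qv v) = qform a b u v.
Proof. unfold qform, Qv, sum3, Qm; simpl. ring. Qed.

Lemma qform_Qv2_r (a b : R) (u v : vec) : qform a b u (Qv (Qv v)) = qform (- a) b u v.
Proof. unfold qform, Qv, sum3, Qm; simpl. ring. Qed.

Lemma induces_Q_basis_nonzero (x : vec) :
  induces_Q_basis x -> x 0%nat <> 0 \/ x 1%nat <> 0 \/ x 2%nat <> 0.
Proof.
  intros HQ.
  destruct (Req_dec (x 0%nat) 0) as [h0|h0]; [|now left].
  destruct (Req_dec (x 1%nat) 0) as [h1|h1]; [|now right; left].
  destruct (Req_dec (x 2%nat) 0) as [h2|h2]; [|now right; right].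
  exfalso. destruct (HQ 1 0 0) as [H _]; [|lra].
  intros [|[|[|i]]] Hi; simpl; first [lra | lia].
Qed.

Lemma qform_nonneg (a b : R) (u : vec) : 0 <= a -> 0 <= b -> 0 <= qform a b u u.
Proof.
  intros Ha Hb. unfold qform.
  pose proof (Rle_0_sqr (u 0%nat)); pose proof (Rle_0_sqr (u 1%nat));
  pose proof (Rle_0_sqr (u 2%nat)); unfold Rsqr in *. nra.
Qed.

Lemma qform_pos (a b : R) (u : vec) :
  0 < a -> 0 < b -> u 0%nat <> 0 \/ u 1%nat <> 0 \/ u 2%nat <> 0 -> 0 < qform a b u u.
Proof.
  intros Ha Hb Hu. unfold qform.
  pose proof (Rle_0_sqr (u 0%nat)); pose proof (Rle_0_sqr (u 1%nat));
  pose proof (Rle_0_sqr (u 2%nat)).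
  destruct Hu as [h|[h|h]]; pose proof (Rsqr_pos_lt _ h); unfold Rsqr in *; nra.
Qed.

Lemma qform_ratio_bounds (a b : R) (u : vec) :
  0 < a -> 0 < b -> 0 < qform a b u u ->
  -1 <= qform (- a) b u u / qform a b u u <= 1.
Proof.
  intros Ha Hb HS.
  assert (-qform a b u u <= qform (- a) b u u <= qform a b u u)
    by (unfold qform in *; nra).
  pose proof (Rinv_0_lt_compat _ HS). pose proof (Rinv_r _ (Rgt_not_eq _ _ HS)).
  unfold Rdiv. split; nra.
Qed.

Lemma r_til_qform (A B : pt -> R) (p : pt) (al be : R) (v : vec) :
  agree3 (at_pt (rho_til A B) p) (diag_aab al be) ->
  r_til A B p v = qform al be v v / qform (- A p) (B p) v v.
Proof.
  intros Hric. unfold r_til.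
  rewrite (bil_diag_aab _ _ _ _ _ Hric), (bil_diag_aab _ _ _ _ _ (gtil_diag_aab A B p)).
  reflexivity.
Qed.

Lemma gangle_Qv2 (A B : pt -> R) (p : pt) (x : vec) :
  0 < A p -> 0 < B p ->
  gangle A B p x (Qv (Qv x)) = acos (qform (- A p) (B p) x x / qform (A p) (B p) x x).
Proof.
  intros Ha Hb.
  unfold gangle. rewrite !(bil_diag_aab _ _ _ _ _ (gmet_diag_aab A B p)), qform_Qv2_r, !qform_Qv.
  rewrite sqrt_square; [reflexivity|].
  apply qform_nonneg; lra.
Qed.

(** With [n = (x^1)^2 + (x^2)^2] and [m = (x^3)^2], the left side is [r~(x)], the ratio under
    [/ 8] is [cos psi], and the two traces are [tau~*] and [tau~]. *)
Lemma r_til_trace_identity (al be a b n m : R) :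
  a <> 0 -> b <> 0 -> a * n + b * m <> 0 -> - a * n + b * m <> 0 ->
  (al * n + be * m) / (- a * n + b * m) =
  / (8 * ((- a * n + b * m) / (a * n + b * m))) * (3 * (2 * al / a + be / b) + (2 * al / - a + be / b))
  + / 8 * (3 * (2 * al / - a + be / b) + (2 * al / a + be / b)).
Proof. intros. field. repeat split; auto. Qed.

Theorem proposition5p8
  (U : pt -> Prop) (A B : pt -> R)
  (HU : open U)
  (HA : smooth_on U A) (HB : smooth_on U B)
  (HApos : forall y, U y -> 0 < A y) (HBpos : forall y, U y -> 0 < B y)
  (Hflat : forall y, U y -> forall l i j k : nat,
      (l < 3)%nat -> (i < 3)%nat -> (j < 3)%nat -> (k < 3)%nat ->
      Riem (gmet A B) l i j k y = 0)
  (p : pt) (Hp : U p) (x : vec)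
  (HQ : induces_Q_basis x)
  (Hpsi : gangle A B p x (Qv (Qv x)) <> PI / 2) :
  let psi := gangle A B p x (Qv (Qv x)) in
  let F := / (8 * cos psi) * (3 * tau_til_star A B p + tau_til A B p)
           + / 8 * (3 * tau_til A B p + tau_til_star A B p) in
  r_til A B p x = r_til A B p (Qv x) /\
  r_til A B p (Qv x) = r_til A B p (Qv (Qv x)) /\
  r_til A B p (Qv (Qv x)) = r_til A B p (Qv (Qv (Qv x))) /\
  r_til A B p (Qv (Qv (Qv x))) = F.
Proof.
  intros psi F; subst psi F.
  pose proof (HApos p Hp) as Ha; pose proof (HBpos p Hp) as Hb.
  pose proof (Ric_gtil_of_flat_gmet U A B p HU HA HB HApos HBpos Hp (Hflat p Hp)) as Hric.
  set (al := Ric (gtil A B) 0 0 p) in Hric; set (be := Ric (gtil A B) 2 2 p) in Hric.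
  unfold tau_til, tau_til_star.
  rewrite (trace_wrt_diag_aab _ _ _ _ _ _ _ (gtil_diag_aab A B p) Hric) by lra.
  rewrite (trace_wrt_diag_aab _ _ _ _ _ _ _ (gmet_diag_aab A B p) Hric) by lra.
  rewrite !(r_til_qform A B p al be _ Hric), !qform_Qv.
  rewrite gangle_Qv2 in Hpsi |- * by assumption.
  pose proof (qform_pos (A p) (B p) x Ha Hb (induces_Q_basis_nonzero x HQ)) as HS.
  assert (HT : qform (- A p) (B p) x x <> 0).
  { intros HT. apply Hpsi. rewrite HT, Rdiv_0_l. exact acos_0. }
  rewrite cos_acos by (apply qform_ratio_bounds; assumption).
  repeat split; [reflexivity..|].
  unfold qform in *. apply r_til_trace_identity; lra.
Qed.
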